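(* Let $\alpha\in(0,1)\cup(1,\infty)$, let $\rho_{AB}$ be a state on a finite-dimensional $\mathcal{H}_A\otimes\mathcal{H}_B$, and let $U_A$, $V_B$ be unitaries on $\mathcal{H}_A$ and $\mathcal{H}_B$. Then $D^\alpha(\overline{A};B)_{(U_A\otimes V_B)\rho_{AB}(U_A\otimes V_B)^\dagger}=D^\alpha(\overline{A};B)_\rho$.
   Context: All Hilbert spaces are finite-dimensional, $\log$ is natural. For a positive semi-definite $M$ and function $f$, $f(M)$ applies $f$ only to nonzero eigenvalues (negative powers are generalized inverses). For a state $\rho_{ABE}$ and $\alpha\in(0,1)\cup(1,\infty)$, $$I_\alpha(A;B|E)_\rho=\frac{\alpha}{\alpha-1}\log\mathrm{Tr}\Big\{\Big(\rho_E^{(\alpha-1)/2}\,\mathrm{Tr}_A\big\{\rho_{AE}^{(1-\alpha)/2}\rho_{ABE}^{\alpha}\rho_{AE}^{(1-\alpha)/2}\big\}\,\rho_E^{(\alpha-1)/2}\Big)^{1/\alpha}\Big\}.$$ The Rényi quantum discord of $\rho_{AB}$ is $D^\alpha(\overline{A};B)_\rho=\inf_{\{\Lambda_x\}}I_\alpha(E;B|X)_\omega$, the infimum over POVMs $\{\Lambda_x\}$ on $\mathcal{H}_A$, where $\omega_{EXB}=U_{A\to EX}\rho_{AB}U_{A\to EX}^\dagger$ and $U_{A\to EX}$ is an isometric extension of the measurement channel $\sigma\mapsto\sum_x\mathrm{Tr}\{\Lambda_x\sigma\}|x\rangle\langle x|_X$ (the same formula is used for every $\alpha\neq1$). *)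

From HB Require Import structures.
From mathcomp Require Import all_boot all_order all_algebra.
From mathcomp Require Import spectral.
From mathcomp Require Import complex.
From mathcomp Require mxtens.
From mathcomp Require Import all_classical all_reals.
From mathcomp Require Import ereal exp.

Set Implicit Arguments.
Unset Strict Implicit.
Unset Printing Implicit Defensive.

Import Order.TTheory GRing.Theory Num.Theory.
Local Open Scope ring_scope.

Section QDefs.
Variable R : realType.
Local Notation C := (R[i]).

(* Kronecker (tensor) product; index (i,j) of 'I_(m*n) is i*n+j. *)
Definition kron {m n p q : nat} (A : 'M[C]_(m, n)) (B : 'M[C]_(p, q))
  : 'M[C]_(m * p, n * q) := mxtens.tensmx A B.

Definition tidx {m n : nat} (i : 'I_m) (j : 'I_n) : 'I_(m * n) :=
  mxtens.mxtens_index (i, j).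

Definition adj {m n : nat} (M : 'M[C]_(m, n)) : 'M[C]_(n, m) :=
  map_mx (@Num.conj C) (M ^T).

Definition psd {n : nat} (M : 'M[C]_n) : Prop :=
  adj M = M /\ forall v : 'cV[C]_n, 0 <= (adj v *m M *m v) 0 0.

Definition is_state {n : nat} (rho : 'M[C]_n) : Prop :=
  psd rho /\ \tr rho = 1.

Definition unitary {n : nat} (U : 'M[C]_n) : Prop := U \is unitarymx.

(* Functional calculus for a normal matrix, with f applied only to the
   nonzero eigenvalues (zero eigenvalues are sent to 0). Used on positive
   semidefinite matrices, whose eigenvalues are real and nonnegative. *)
Definition mxfun {n : nat} (f : R -> R) (M : 'M[C]_n) : 'M[C]_n :=
  let P := spectralmx M in
  let d := spectral_diag M in
  invmx P *m
  diag_mx (\row_i (if d 0 i == 0 then 0 else real_complex R (f (complex.Re (d 0 i))))) *m P.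

(* generalized real power M^p (negative powers = generalized inverses) *)
Definition mxpow {n : nat} (M : 'M[C]_n) (p : R) : 'M[C]_n :=
  mxfun (fun x => powR x p) M.

(* Tripartite systems are ordered ((A * B) * C). *)
Definition idx3 {a b c : nat} (i : 'I_a) (j : 'I_b) (k : 'I_c)
  : 'I_(a * b * c) := tidx (tidx i j) k.

Definition ptrB {a b c : nat} (M : 'M[C]_(a * b * c)) : 'M[C]_(a * c) :=
  \sum_(i < a) \sum_(i' < a) \sum_(k < c) \sum_(k' < c)
    (\sum_(j < b) M (idx3 i j k) (idx3 i' j k')) *:
       delta_mx (tidx i k) (tidx i' k').

Definition ptrA {a b c : nat} (M : 'M[C]_(a * b * c)) : 'M[C]_(b * c) :=
  \sum_(j < b) \sum_(j' < b) \sum_(k < c) \sum_(k' < c)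
    (\sum_(i < a) M (idx3 i j k) (idx3 i j' k')) *:
       delta_mx (tidx j k) (tidx j' k').

Definition ptrAB {a b c : nat} (M : 'M[C]_(a * b * c)) : 'M[C]_c :=
  \matrix_(k, k') \sum_(i < a) \sum_(j < b) M (idx3 i j k) (idx3 i j k').

(* X_AC |-> X_AC (x) 1_B, as an operator on ABC *)
Definition extB {a b c : nat} (X : 'M[C]_(a * c)) : 'M[C]_(a * b * c) :=
  \sum_(i < a) \sum_(i' < a) \sum_(j < b) \sum_(k < c) \sum_(k' < c)
    X (tidx i k) (tidx i' k') *: delta_mx (idx3 i j k) (idx3 i' j k').

(* Renyi conditional mutual information I_alpha(A;B|C) of a tripartite
   operator rho on ((A * B) * C). *)
Definition renyi_cmi {a b c : nat} (alpha : R) (rho : 'M[C]_(a * b * c)) : R :=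
  let rAC := ptrB rho in
  let rC := ptrAB rho in
  let S := extB (b := b) (mxpow rAC ((1 - alpha) / 2)) in
  let inner := ptrA (S *m mxpow rho alpha *m S) in
  let T := kron (1%:M : 'M[C]_b) (mxpow rC ((alpha - 1) / 2)) in
  alpha / (alpha - 1) * ln (complex.Re (\tr (mxpow (T *m inner *m T) alpha^-1))).

Definition povm {d k : nat} (L : 'I_k -> 'M[C]_d) : Prop :=
  (forall x, psd (L x)) /\ \sum_(x < k) L x = 1%:M.

(* Canonical isometric extension U_{A -> E X} of the measurement channel
   sigma |-> sum_x Tr(L_x sigma) |x><x|_X, with E = A' (x) X':
     U |psi> = sum_x (sqrt L_x |psi>)_A' (x) |x>_X' (x) |x>_X.
   Output ordering ((A' * X') * X). *)
Definition meas_iso {d k : nat} (L : 'I_k -> 'M[C]_d) : 'M[C]_(d * k * k, d) :=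
  \sum_(x < k) \sum_(a' < d) \sum_(a0 < d)
    (mxpow (L x) (2^-1)) a' a0 *: delta_mx (idx3 a' x x) a0.

Definition swap23 {e x b : nat} (M : 'M[C]_(e * x * b)) : 'M[C]_(e * b * x) :=
  \sum_(i < e) \sum_(i' < e) \sum_(u < x) \sum_(u' < x)
    \sum_(j < b) \sum_(j' < b)
      M (idx3 i u j) (idx3 i' u' j') *: delta_mx (idx3 i j u) (idx3 i' j' u').

(* omega_{EXB} = (U_{A->EX} (x) 1_B) rho_AB (U_{A->EX} (x) 1_B)^dagger,
   reordered as ((E * B) * X) with E = A' (x) X'. *)
Definition post_meas {dA dB k : nat} (L : 'I_k -> 'M[C]_dA)
  (rho : 'M[C]_(dA * dB)) : 'M[C]_(dA * k * dB * k) :=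
  let W := kron (meas_iso L) (1%:M : 'M[C]_dB) in
  swap23 (W *m rho *m adj W).

(* Renyi quantum discord D^alpha(\bar A; B)_rho = inf over POVMs on A
   (with any finite number of outcomes) of I_alpha(E;B|X)_omega. *)
Definition renyi_discord {dA dB : nat} (alpha : R) (rho : 'M[C]_(dA * dB))
  : \bar R :=
  ereal_inf [set r : \bar R | exists (k : nat) (L : 'I_k -> 'M[C]_dA),
                 povm L /\ r = (renyi_cmi alpha (post_meas L rho))%:E].

End QDefs.

(* Rotating rho by U (x) V amounts to rotating the POVM {L_x} into {U L_x U^+}:
   the post-measurement state of the rotated state for the rotated POVM is the
   original one conjugated by the local unitary (U (x) 1_X') (x) V on E (x) B,
   with X untouched. The conditional Renyi information I_alpha(E;B|X) does not
   see such local unitaries, because the partial traces intertwine them and the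
   functional calculus commutes with unitary conjugation. Since L |-> U L U^+ is
   a bijection of POVMs, both infima range over the same set of values. *)

From HB Require Import structures.
From mathcomp Require Import all_boot all_order all_algebra.
From mathcomp Require Import spectral complex.
From mathcomp Require mxtens.
From mathcomp Require Import all_classical all_reals.
From mathcomp Require Import ereal exp.
From mathcomp Require Import ring.

Set Implicit Arguments.
Unset Strict Implicit.
Unset Printing Implicit Defensive.

Import Order.TTheory GRing.Theory Num.Theory.
Local Open Scope ring_scope.

Section RenyiDiscordInvariance.
Variable R : realType.
Local Notation C := (R[i]).

(** * Adjoints and unitaries *)

Lemma adjE m n (A : 'M[C]_(m, n)) i j : adj A i j = (A j i)^*.
Proof. by rewrite !mxE. Qed.

Lemma adjM m n p (A : 'M[C]_(m, n)) (B : 'M[C]_(n, p)) :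
  adj (A *m B) = adj B *m adj A.
Proof. by rewrite /adj trmx_mul map_mxM. Qed.

Lemma adjK m n (A : 'M[C]_(m, n)) : adj (adj A) = A.
Proof. by apply/matrixP => i j; rewrite !mxE conjCK. Qed.

Lemma adjmx1 n : adj (1%:M : 'M[C]_n) = 1%:M.
Proof. by rewrite /adj trmx1 map_mx1. Qed.

Lemma adj_conjmx m n (G : 'M[C]_(m, n)) (X : 'M[C]_n) :
  adj X = X -> adj (G *m X *m adj G) = G *m X *m adj G.
Proof. by move=> hX; rewrite !adjM adjK hX mulmxA. Qed.

Lemma adj_sandwich n (T X : 'M[C]_n) : adj T = T -> adj X = X ->
  adj (T *m X *m T) = T *m X *m T.
Proof. by move=> hT hX; rewrite !adjM hT hX mulmxA. Qed.

Lemma conjmx_comp m n p (A : 'M[C]_(m, n)) (K : 'M[C]_(n, p)) (X : 'M[C]_p) :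
  A *m (K *m X *m adj K) *m adj A = A *m K *m X *m adj (A *m K).
Proof. by rewrite !adjM !mulmxA. Qed.

Lemma unitary_mul_adj n (U : 'M[C]_n) : unitary U -> U *m adj U = 1%:M.
Proof. by move/unitarymxP. Qed.

Lemma unitary_adj_mul n (U : 'M[C]_n) : unitary U -> adj U *m U = 1%:M.
Proof. by move/unitary_mul_adj/mulmx1C. Qed.

Lemma unitary_adj n (U : 'M[C]_n) : unitary U -> unitary (adj U).
Proof.
by move=> hU; apply/unitarymxP; rewrite -/(adj _) adjK unitary_adj_mul.
Qed.

Lemma unitary1 {n} : unitary (1%:M : 'M[C]_n).
Proof. by apply/unitarymxP; rewrite -/(adj _) adjmx1 mulmx1. Qed.

Lemma mxtrace_unitary_conj n (U X : 'M[C]_n) :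
  unitary U -> \tr (U *m X *m adj U) = \tr X.
Proof. by move=> hU; rewrite mxtrace_mulC mulmxA unitary_adj_mul // mul1mx. Qed.

(** * Functional calculus *)

Lemma invmxM n (A B : 'M[C]_n) : A \in unitmx -> B \in unitmx ->
  invmx (A *m B) = invmx B *m invmx A.
Proof.
move=> uA uB; have uAB : A *m B \in unitmx by rewrite unitmx_mul uA uB.
rewrite -[RHS]mulmx1 -(mulmxV uAB) !mulmxA -(mulmxA _ (invmx A) A) mulVmx //.
by rewrite mulmx1 mulVmx // mul1mx.
Qed.

Lemma conj_invmx_intertwine n (P Q A B : 'M[C]_n) :
  P \in unitmx -> Q \in unitmx ->
  invmx Q *m B *m Q = invmx P *m A *m P <->
  A *m (P *m invmx Q) = (P *m invmx Q) *m B.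
Proof.
move=> uP uQ; split => [E|E].
  have -> : A = P *m (invmx P *m A *m P) *m invmx P.
    by rewrite !mulmxA (mulmxV uP) mul1mx -mulmxA (mulmxV uP) mulmx1.
  rewrite -E -!mulmxA (mulmxA (invmx P) P) (mulVmx uP) mul1mx (mulmxV uQ).
  by rewrite mulmx1 !mulmxA.
have -> : invmx P *m A *m P = invmx P *m (A *m (P *m invmx Q)) *m Q.
  by rewrite -!mulmxA (mulVmx uQ) mulmx1.
by rewrite E !mulmxA (mulVmx uP) mul1mx.
Qed.

(* An intertwiner W of diag d and diag e satisfies W_ij (d_i - e_j) = 0, hence
   also intertwines diag (h d) and diag (h e). *)
Lemma diag_mx_similar_map n (P Q : 'M[C]_n) (d e : 'rV[C]_n) (h : C -> C) :
  P \in unitmx -> Q \in unitmx ->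
  invmx Q *m diag_mx e *m Q = invmx P *m diag_mx d *m P ->
  invmx Q *m diag_mx (\row_i h (e 0 i)) *m Q =
  invmx P *m diag_mx (\row_i h (d 0 i)) *m P.
Proof.
move=> uP uQ /(conj_invmx_intertwine _ _ uP uQ) HW.
apply/(conj_invmx_intertwine _ _ uP uQ).
move: (P *m invmx Q) HW => W HW.
apply/matrixP => i j; have := congr1 (fun X : 'M[C]_n => X i j) HW.
rewrite !mul_diag_mx !mul_mx_diag !mxE.
have [->|nz] := eqVneq (W i j) 0; first by move=> _; rewrite mulr0 mul0r.
move=> E; have : W i j * d 0 i = W i j * e 0 j by rewrite mulrC E.
by move/(mulfI nz) => ->; rewrite mulrC.
Qed.

Definition eigfun (f : R -> R) (x : C) : C :=
  if x == 0 then 0 else real_complex R (f (complex.Re x)).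

Lemma mxfunE n f (M : 'M[C]_n) :
  mxfun f M = invmx (spectralmx M) *m
     diag_mx (\row_i eigfun f (spectral_diag M 0 i)) *m spectralmx M.
Proof. by []. Qed.

Lemma selfadj_normalmx n (M : 'M[C]_n) : adj M = M -> M \is normalmx.
Proof. by move=> hM; apply/normalmxP; rewrite -/(adj M) hM. Qed.

Lemma invmx_adj_unitary n (G : 'M[C]_n) : unitary G -> invmx (adj G) = G.
Proof.
move=> hG; have uG : adj G \in unitmx by apply/unitarymx_unit/unitary_adj.
by rewrite -[LHS]mulmx1 -(unitary_adj_mul hG) mulmxA mulVmx ?mul1mx.
Qed.

Lemma mxfun_similar_diag n f (M P : 'M[C]_n) (d : 'rV[C]_n) :
  adj M = M -> P \in unitmx -> M = invmx P *m diag_mx d *m P ->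
  mxfun f M = invmx P *m diag_mx (\row_i eigfun f (d 0 i)) *m P.
Proof.
move=> hM uP E; have /orthomx_spectralP := selfadj_normalmx hM.
rewrite mxfunE; move: (spectral_unit M).
move: (spectralmx M) (spectral_diag M) => S e uS E'.
by apply: diag_mx_similar_map => //; rewrite -E' -E.
Qed.

Lemma mxfun_unitary_conj n f (M G : 'M[C]_n) : adj M = M -> unitary G ->
  mxfun f (G *m M *m adj G) = G *m mxfun f M *m adj G.
Proof.
move=> hM hG; have /orthomx_spectralP := selfadj_normalmx hM.
move: (spectral_unit M); move: (spectralmx M) (spectral_diag M) => S e uS E.
have uGadj : adj G \in unitmx by apply/unitarymx_unit/unitary_adj.
have uSG : S *m adj G \in unitmx by rewrite unitmx_mul uS uGadj.
have conjG X : invmx (S *m adj G) *m X *m (S *m adj G) =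
               G *m (invmx S *m X *m S) *m adj G.
  by rewrite (invmxM uS uGadj) (invmx_adj_unitary hG) !mulmxA.
rewrite [in RHS](mxfun_similar_diag f hM uS E) -[in RHS]conjG.
apply: mxfun_similar_diag uSG _; first exact: adj_conjmx.
by rewrite conjG -E.
Qed.

Lemma mxpow_unitary_conj n (M G : 'M[C]_n) p : adj M = M -> unitary G ->
  mxpow (G *m M *m adj G) p = G *m mxpow M p *m adj G.
Proof. exact: mxfun_unitary_conj. Qed.

Lemma adj_mxfun n f (M : 'M[C]_n) : adj (mxfun f M) = mxfun f M.
Proof.
rewrite mxfunE; move: (spectral_unitarymx M).
move: (spectralmx M) (spectral_diag M) => S e uS.
set D := diag_mx _; have hD : adj D = D.
  rewrite /D /adj tr_diag_mx map_diag_mx; congr diag_mx.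
  apply/matrixP => i j; rewrite !mxE /eigfun.
  by case: eqP => _; [rewrite rmorph0 | exact: conjc_real].
by rewrite (invmx_unitary uS : invmx S = adj S) !adjM adjK hD mulmxA.
Qed.

Lemma adj_mxpow n (M : 'M[C]_n) p : adj (mxpow M p) = mxpow M p.
Proof. exact: adj_mxfun. Qed.

(** * Tensor indices and Kronecker products *)

Lemma eq_tidx m n (i i' : 'I_m) (j j' : 'I_n) :
  (tidx i j == tidx i' j') = (i == i') && (j == j').
Proof.
apply/eqP/andP => [E|[/eqP -> /eqP ->] //].
have := congr1 (@mxtens.mxtens_unindex m n) E.
by rewrite /tidx !mxtens.mxtens_indexK; case=> -> ->.
Qed.

Lemma eq_idx3 a b c (i i' : 'I_a) (j j' : 'I_b) (k k' : 'I_c) :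
  (idx3 i j k == idx3 i' j' k') = [&& i == i', j == j' & k == k'].
Proof. by rewrite /idx3 !eq_tidx andbA. Qed.

Lemma big_tidx m n (F : 'I_(m * n) -> C) :
  \sum_r F r = \sum_i \sum_j F (tidx i j).
Proof.
rewrite pair_bigA /= (reindex (@mxtens.mxtens_index m n)) /=; last first.
  by exists (@mxtens.mxtens_unindex m n) => x _;
    rewrite ?mxtens.mxtens_indexK ?mxtens.mxtens_unindexK.
by apply: eq_bigr => -[i j] _.
Qed.

Lemma big_idx3 a b c (F : 'I_(a * b * c) -> C) :
  \sum_r F r = \sum_i \sum_j \sum_k F (idx3 i j k).
Proof. by rewrite big_tidx (big_tidx (fun ij => \sum_k F (tidx ij k))). Qed.

Lemma matrix_tidxP m n p q (A B : 'M[C]_(m * n, p * q)) :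
  (forall i k i' k', A (tidx i k) (tidx i' k') = B (tidx i k) (tidx i' k')) ->
  A = B.
Proof.
move=> E; apply/matrixP => r s.
case: (mxtens.mxtens_indexP r) => i k; case: (mxtens.mxtens_indexP s) => i' k'.
exact: E.
Qed.

Lemma matrix_idx3P a b c a' b' c' (A B : 'M[C]_(a * b * c, a' * b' * c')) :
  (forall i j k i' j' k', A (idx3 i j k) (idx3 i' j' k') =
                          B (idx3 i j k) (idx3 i' j' k')) -> A = B.
Proof.
move=> E; apply: matrix_tidxP => ij k ij' k'.
case: (mxtens.mxtens_indexP ij) => i j; case: (mxtens.mxtens_indexP ij') => i' j'.
exact: E.
Qed.

Lemma matrix_idx3_rowP a b c n (A B : 'M[C]_(a * b * c, n)) :
  (forall i j k s, A (idx3 i j k) s = B (idx3 i j k) s) -> A = B.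
Proof.
move=> E; apply/matrixP => r s.
case: (mxtens.mxtens_indexP r) => ij k; case: (mxtens.mxtens_indexP ij) => i j.
exact: E.
Qed.

Lemma kronE m n p q (A : 'M[C]_(m, n)) (B : 'M[C]_(p, q)) i j k l :
  kron A B (tidx i j) (tidx k l) = A i k * B j l.
Proof. exact: mxtens.tensmxE. Qed.

Lemma kron3E a b c a' b' c' (A : 'M[C]_(a, a')) (B : 'M[C]_(b, b'))
  (D : 'M[C]_(c, c')) i j k i' j' k' :
  kron (kron A B) D (idx3 i j k) (idx3 i' j' k') = A i i' * B j j' * D k k'.
Proof. by rewrite /idx3 !kronE. Qed.

Lemma mx1E n (i j : 'I_n) : (1%:M : 'M[C]_n) i j = (i == j)%:R.
Proof. by rewrite mxE. Qed.

Lemma big_pick1 (T : finType) (t0 : T) (F : T -> C) (P : pred T) :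
  (forall t, P t -> t = t0) -> \sum_t F t * (P t)%:R = F t0 * (P t0)%:R.
Proof.
move=> E; rewrite (bigD1 t0) //= big1 ?addr0 // => t nt.
case Pt: (P t); last by rewrite mulr0.
by move: nt; rewrite (E _ Pt) eqxx.
Qed.

Lemma sum_mul_eql (I : finType) (j : I) (F : I -> C) :
  \sum_i F i * (i == j)%:R = F j.
Proof. by rewrite (big_pick1 (t0 := j) F (P := (eq_op^~ j))) ?eqxx ?mulr1 // => t /eqP. Qed.

Lemma sum_mul_eqr (I : finType) (j : I) (F : I -> C) :
  \sum_i F i * (j == i)%:R = F j.
Proof. by rewrite -(sum_mul_eql j F); apply: eq_bigr => i _; rewrite eq_sym. Qed.

Lemma ptrBE a b c (M : 'M[C]_(a * b * c)) i k i' k' :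
  ptrB M (tidx i k) (tidx i' k') = \sum_j M (idx3 i j k) (idx3 i' j k').
Proof.
rewrite /ptrB !pair_bigA summxE /=.
under eq_bigr => t _ do rewrite !mxE.
rewrite (big_pick1 (t0 := (i, i', k, k'))) /= ?eqxx ?mulr1 //.
case=> [[[x y] z] w] /=; rewrite !eq_tidx.
by case/andP => /andP[/eqP <- /eqP <-] /andP[/eqP <- /eqP <-].
Qed.

Lemma ptrAE a b c (M : 'M[C]_(a * b * c)) j k j' k' :
  ptrA M (tidx j k) (tidx j' k') = \sum_i M (idx3 i j k) (idx3 i j' k').
Proof.
rewrite /ptrA !pair_bigA summxE /=.
under eq_bigr => t _ do rewrite !mxE.
rewrite (big_pick1 (t0 := (j, j', k, k'))) /= ?eqxx ?mulr1 //.
case=> [[[x y] z] w] /=; rewrite !eq_tidx.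
by case/andP => /andP[/eqP <- /eqP <-] /andP[/eqP <- /eqP <-].
Qed.

Lemma ptrABE a b c (M : 'M[C]_(a * b * c)) k k' :
  ptrAB M k k' = \sum_i \sum_j M (idx3 i j k) (idx3 i j k').
Proof. by rewrite mxE. Qed.

Lemma extBE a b c (X : 'M[C]_(a * c)) i j k i' j' k' :
  extB (b := b) X (idx3 i j k) (idx3 i' j' k') =
  X (tidx i k) (tidx i' k') * (j == j')%:R.
Proof.
rewrite /extB !pair_bigA summxE /=.
under eq_bigr => t _ do rewrite !mxE.
rewrite (big_pick1 (t0 := (i, i', j, k, k'))) /=.
  by rewrite !eq_idx3 !eqxx /= ?andbT eq_sym.
case=> [[[[x y] z] w] v] /=; rewrite !eq_idx3.
by case/andP => /and3P[/eqP <- /eqP <- /eqP <-] /and3P[/eqP <- _ /eqP <-].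
Qed.

Lemma swap23E e x b (M : 'M[C]_(e * x * b)) i j u i' j' u' :
  swap23 M (idx3 i j u) (idx3 i' j' u') = M (idx3 i u j) (idx3 i' u' j').
Proof.
rewrite /swap23 !pair_bigA summxE /=.
under eq_bigr => t _ do rewrite !mxE.
rewrite (big_pick1 (t0 := (i, i', u, u', j, j'))) /= ?eq_idx3 ?eqxx ?mulr1 //.
case=> [[[[[p q] r] s] v] w] /=; rewrite !eq_idx3.
by case/andP => /and3P[/eqP <- /eqP <- /eqP <-] /and3P[/eqP <- /eqP <- /eqP <-].
Qed.

Lemma kron3_mulmxE a b c a' b' c' (A : 'M[C]_(a, a')) (B : 'M[C]_(b, b'))
  (D : 'M[C]_(c, c')) n (M : 'M[C]_(a' * b' * c', n)) i j k s :
  (kron (kron A B) D *m M) (idx3 i j k) s =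
  \sum_p \sum_q \sum_l A i p * B j q * D k l * M (idx3 p q l) s.
Proof. by rewrite mxE big_idx3; do 3!(apply: eq_bigr => ? _); rewrite kron3E. Qed.

Lemma mulmx_kron3E a b c a' b' c' (A : 'M[C]_(a, a')) (B : 'M[C]_(b, b'))
  (D : 'M[C]_(c, c')) n (M : 'M[C]_(n, a * b * c)) r i j k :
  (M *m kron (kron A B) D) r (idx3 i j k) =
  \sum_p \sum_q \sum_l M r (idx3 p q l) * (A p i * B q j * D l k).
Proof. by rewrite mxE big_idx3; do 3!(apply: eq_bigr => ? _); rewrite kron3E. Qed.

Lemma kronA1D_mulmxE a b c (A : 'M[C]_a) (D : 'M[C]_c)
  n (M : 'M[C]_(a * b * c, n)) i j k s :
  (kron (kron A 1%:M) D *m M) (idx3 i j k) s =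
  \sum_p \sum_l A i p * D k l * M (idx3 p j l) s.
Proof.
rewrite kron3_mulmxE; apply: eq_bigr => p _.
rewrite (bigD1 j) //= [X in _ + X]big1 ?addr0.
  by apply: eq_bigr => l _; rewrite mx1E eqxx mulr1.
move=> q nq; apply: big1 => l _.
by rewrite mx1E eq_sym (negbTE nq) mulr0 !mul0r.
Qed.

Lemma mulmx_kronA1DE a b c (A : 'M[C]_a) (D : 'M[C]_c)
  n (M : 'M[C]_(n, a * b * c)) r i j k :
  (M *m kron (kron A 1%:M) D) r (idx3 i j k) =
  \sum_p \sum_l M r (idx3 p j l) * (A p i * D l k).
Proof.
rewrite mulmx_kron3E; apply: eq_bigr => p _.
rewrite (bigD1 j) //= [X in _ + X]big1 ?addr0.
  by apply: eq_bigr => l _; rewrite mx1E eqxx mulr1.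
move=> q nq; apply: big1 => l _.
by rewrite mx1E (negbTE nq) mulr0 !mul0r mulr0.
Qed.

Lemma kron1BD_mulmxE a b c (B : 'M[C]_b) (D : 'M[C]_c)
  n (M : 'M[C]_(a * b * c, n)) i j k s :
  (kron (kron 1%:M B) D *m M) (idx3 i j k) s =
  \sum_q \sum_l B j q * D k l * M (idx3 i q l) s.
Proof.
rewrite kron3_mulmxE (bigD1 i) //= [X in _ + X]big1 ?addr0.
  by apply: eq_bigr => q _; apply: eq_bigr => l _; rewrite mx1E eqxx mul1r.
move=> p np; apply: big1 => q _; apply: big1 => l _.
by rewrite mx1E eq_sym (negbTE np) !mul0r.
Qed.

Lemma mulmx_kron1BDE a b c (B : 'M[C]_b) (D : 'M[C]_c)
  n (M : 'M[C]_(n, a * b * c)) r i j k :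
  (M *m kron (kron 1%:M B) D) r (idx3 i j k) =
  \sum_q \sum_l M r (idx3 i q l) * (B q j * D l k).
Proof.
rewrite mulmx_kron3E (bigD1 i) //= [X in _ + X]big1 ?addr0.
  by apply: eq_bigr => q _; apply: eq_bigr => l _; rewrite mx1E eqxx mul1r.
move=> p np; apply: big1 => q _; apply: big1 => l _.
by rewrite mx1E (negbTE np) !mul0r mulr0.
Qed.

Lemma kronAB1_mulmxE a b c (A : 'M[C]_a) (B : 'M[C]_b)
  n (M : 'M[C]_(a * b * c, n)) i j k s :
  (kron (kron A B) 1%:M *m M) (idx3 i j k) s =
  \sum_p \sum_q A i p * B j q * M (idx3 p q k) s.
Proof.
rewrite kron3_mulmxE; apply: eq_bigr => p _; apply: eq_bigr => q _.
rewrite (bigD1 k) //= [X in _ + X]big1 ?addr0; first by rewrite mx1E eqxx mulr1.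
by move=> l nl; rewrite mx1E eq_sym (negbTE nl) mulr0 mul0r.
Qed.

Lemma mulmx_kronAB1E a b c (A : 'M[C]_a) (B : 'M[C]_b)
  n (M : 'M[C]_(n, a * b * c)) r i j k :
  (M *m kron (kron A B) 1%:M) r (idx3 i j k) =
  \sum_p \sum_q M r (idx3 p q k) * (A p i * B q j).
Proof.
rewrite mulmx_kron3E; apply: eq_bigr => p _; apply: eq_bigr => q _.
rewrite (bigD1 k) //= [X in _ + X]big1 ?addr0; first by rewrite mx1E eqxx mulr1.
by move=> l nl; rewrite mx1E (negbTE nl) mulr0 mulr0.
Qed.

Lemma kron1B1_mulmxE a b c (B : 'M[C]_b) n (M : 'M[C]_(a * b * c, n)) i j k s :
  (kron (kron 1%:M B) 1%:M *m M) (idx3 i j k) s =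
  \sum_q B j q * M (idx3 i q k) s.
Proof.
rewrite kronAB1_mulmxE (bigD1 i) //= [X in _ + X]big1 ?addr0.
  by apply: eq_bigr => q _; rewrite mx1E eqxx mul1r.
by move=> p np; apply: big1 => q _; rewrite mx1E eq_sym (negbTE np) !mul0r.
Qed.

Lemma mulmx_kron1B1E a b c (B : 'M[C]_b) n (M : 'M[C]_(n, a * b * c)) r i j k :
  (M *m kron (kron 1%:M B) 1%:M) r (idx3 i j k) =
  \sum_q M r (idx3 i q k) * B q j.
Proof.
rewrite mulmx_kronAB1E (bigD1 i) //= [X in _ + X]big1 ?addr0.
  by apply: eq_bigr => q _; rewrite mx1E eqxx mul1r.
by move=> p np; apply: big1 => q _; rewrite mx1E (negbTE np) !mul0r mulr0.
Qed.

Lemma kronA11_mulmxE a b c (A : 'M[C]_a) n (M : 'M[C]_(a * b * c, n)) i j k s :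
  (kron (kron A 1%:M) 1%:M *m M) (idx3 i j k) s =
  \sum_p A i p * M (idx3 p j k) s.
Proof.
rewrite kronAB1_mulmxE; apply: eq_bigr => p _.
rewrite (bigD1 j) //= [X in _ + X]big1 ?addr0; first by rewrite mx1E eqxx mulr1.
by move=> q nq; rewrite mx1E eq_sym (negbTE nq) mulr0 mul0r.
Qed.

Lemma mulmx_kronA11E a b c (A : 'M[C]_a) n (M : 'M[C]_(n, a * b * c)) r i j k :
  (M *m kron (kron A 1%:M) 1%:M) r (idx3 i j k) =
  \sum_p M r (idx3 p j k) * A p i.
Proof.
rewrite mulmx_kronAB1E; apply: eq_bigr => p _.
rewrite (bigD1 j) //= [X in _ + X]big1 ?addr0; first by rewrite mx1E eqxx mulr1.
by move=> q nq; rewrite mx1E (negbTE nq) mulr0 mulr0.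
Qed.

Lemma adj_kron m n p q (A : 'M[C]_(m, n)) (B : 'M[C]_(p, q)) :
  adj (kron A B) = kron (adj A) (adj B).
Proof. by rewrite /adj /kron mxtens.trmx_tens mxtens.map_mxT. Qed.

Lemma kron_mulmx m n p q r s (A : 'M[C]_(m, n)) (B : 'M[C]_(p, q))
  (D : 'M[C]_(n, r)) (E : 'M[C]_(q, s)) :
  kron A B *m kron D E = kron (A *m D) (B *m E).
Proof. exact: mxtens.tensmx_mul. Qed.

Lemma kron1 m n : kron (1%:M : 'M[C]_m) (1%:M : 'M[C]_n) = 1%:M.
Proof.
by apply: matrix_tidxP => i k i' k'; rewrite kronE !mx1E eq_tidx -natrM mulnb.
Qed.

Lemma unitary_kron m n (A : 'M[C]_m) (B : 'M[C]_n) :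
  unitary A -> unitary B -> unitary (kron A B).
Proof.
move=> hA hB; apply/unitarymxP; rewrite -/(adj _) adj_kron kron_mulmx.
by rewrite !unitary_mul_adj // kron1.
Qed.

(** * Partial traces and local operators *)

Lemma ptrB_mull a b c (A : 'M[C]_a) (D : 'M[C]_c) (M : 'M[C]_(a * b * c)) :
  ptrB (kron (kron A 1%:M) D *m M) = kron A D *m ptrB M.
Proof.
apply: matrix_tidxP => i k i' k'; rewrite ptrBE mxE big_tidx.
under eq_bigr => j _ do rewrite kronA1D_mulmxE.
rewrite exchange_big; apply: eq_bigr => p _; rewrite exchange_big.
by apply: eq_bigr => l _; rewrite kronE ptrBE mulr_sumr.
Qed.

Lemma ptrB_mulr a b c (A : 'M[C]_a) (D : 'M[C]_c) (M : 'M[C]_(a * b * c)) :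
  ptrB (M *m kron (kron A 1%:M) D) = ptrB M *m kron A D.
Proof.
apply: matrix_tidxP => i k i' k'; rewrite ptrBE mxE big_tidx.
under eq_bigr => j _ do rewrite mulmx_kronA1DE.
rewrite exchange_big; apply: eq_bigr => p _; rewrite exchange_big.
by apply: eq_bigr => l _; rewrite kronE ptrBE mulr_suml.
Qed.

Lemma ptrB_mulC a b c (B : 'M[C]_b) (M : 'M[C]_(a * b * c)) :
  ptrB (kron (kron 1%:M B) 1%:M *m M) = ptrB (M *m kron (kron 1%:M B) 1%:M).
Proof.
apply: matrix_tidxP => i k i' k'; rewrite !ptrBE.
under eq_bigr => j _ do rewrite kron1B1_mulmxE.
under [RHS]eq_bigr => j _ do rewrite mulmx_kron1B1E.
rewrite exchange_big; apply: eq_bigr => j _; apply: eq_bigr => q _.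
by rewrite mulrC.
Qed.

Lemma ptrA_mull a b c (B : 'M[C]_b) (D : 'M[C]_c) (M : 'M[C]_(a * b * c)) :
  ptrA (kron (kron 1%:M B) D *m M) = kron B D *m ptrA M.
Proof.
apply: matrix_tidxP => j k j' k'; rewrite ptrAE mxE big_tidx.
under eq_bigr => i _ do rewrite kron1BD_mulmxE.
rewrite exchange_big; apply: eq_bigr => q _; rewrite exchange_big.
by apply: eq_bigr => l _; rewrite kronE ptrAE mulr_sumr.
Qed.

Lemma ptrA_mulr a b c (B : 'M[C]_b) (D : 'M[C]_c) (M : 'M[C]_(a * b * c)) :
  ptrA (M *m kron (kron 1%:M B) D) = ptrA M *m kron B D.
Proof.
apply: matrix_tidxP => j k j' k'; rewrite ptrAE mxE big_tidx.
under eq_bigr => i _ do rewrite mulmx_kron1BDE.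
rewrite exchange_big; apply: eq_bigr => q _; rewrite exchange_big.
by apply: eq_bigr => l _; rewrite kronE ptrAE mulr_suml.
Qed.

Lemma ptrA_mulC a b c (A : 'M[C]_a) (M : 'M[C]_(a * b * c)) :
  ptrA (kron (kron A 1%:M) 1%:M *m M) = ptrA (M *m kron (kron A 1%:M) 1%:M).
Proof.
apply: matrix_tidxP => j k j' k'; rewrite !ptrAE.
under eq_bigr => i _ do rewrite kronA11_mulmxE.
under [RHS]eq_bigr => i _ do rewrite mulmx_kronA11E.
rewrite exchange_big; apply: eq_bigr => i _; apply: eq_bigr => p _.
by rewrite mulrC.
Qed.

Lemma exchange_big2 (I J K L : finType) (F : I -> J -> K -> L -> C) :
  \sum_i \sum_j \sum_p \sum_q F i j p q = \sum_p \sum_q \sum_i \sum_j F i j p q.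
Proof.
rewrite pair_bigA [RHS]pair_bigA.
under eq_bigr => x _ do rewrite pair_bigA.
under [RHS]eq_bigr => x _ do rewrite pair_bigA.
exact: exchange_big.
Qed.

Lemma ptrAB_mulC a b c (A : 'M[C]_a) (B : 'M[C]_b) (M : 'M[C]_(a * b * c)) :
  ptrAB (kron (kron A B) 1%:M *m M) = ptrAB (M *m kron (kron A B) 1%:M).
Proof.
apply/matrixP => k k'; rewrite !ptrABE.
under eq_bigr => i _ do under eq_bigr => j _ do rewrite kronAB1_mulmxE.
under [RHS]eq_bigr => i _ do under eq_bigr => j _ do rewrite mulmx_kronAB1E.
rewrite exchange_big2; do 4!(apply: eq_bigr => ? _).
by rewrite mulrC.
Qed.

Lemma extB_mull a b c (A : 'M[C]_a) (D : 'M[C]_c) (X : 'M[C]_(a * c)) :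
  extB (b := b) (kron A D *m X) = kron (kron A 1%:M) D *m extB X.
Proof.
apply: matrix_idx3P => i j k i' j' k'.
rewrite extBE kronA1D_mulmxE mxE big_tidx mulr_suml; apply: eq_bigr => p _.
rewrite mulr_suml; apply: eq_bigr => l _.
by rewrite extBE kronE mulrA.
Qed.

Lemma extB_mulr a b c (A : 'M[C]_a) (D : 'M[C]_c) (X : 'M[C]_(a * c)) :
  extB (b := b) (X *m kron A D) = extB X *m kron (kron A 1%:M) D.
Proof.
apply: matrix_idx3P => i j k i' j' k'.
rewrite extBE mulmx_kronA1DE mxE big_tidx mulr_suml; apply: eq_bigr => p _.
rewrite mulr_suml; apply: eq_bigr => l _.
by rewrite extBE kronE mulrAC.
Qed.

Lemma extB_mulC a b c (B : 'M[C]_b) (X : 'M[C]_(a * c)) :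
  extB (b := b) X *m kron (kron 1%:M B) 1%:M =
  kron (kron 1%:M B) 1%:M *m extB X.
Proof.
apply: matrix_idx3P => i j k i' j' k'.
rewrite kron1B1_mulmxE mulmx_kron1B1E.
under eq_bigr => q _ do rewrite extBE mulrAC.
rewrite sum_mul_eqr.
under eq_bigr => q _ do rewrite extBE mulrA.
by rewrite sum_mul_eql mulrC.
Qed.

Lemma swap23_mull e x b (A : 'M[C]_e) (D : 'M[C]_x) (B : 'M[C]_b)
  (M : 'M[C]_(e * x * b)) :
  swap23 (kron (kron A D) B *m M) = kron (kron A B) D *m swap23 M.
Proof.
apply: matrix_idx3P => i j u i' j' u'.
rewrite swap23E !kron3_mulmxE; apply: eq_bigr => p _; rewrite exchange_big.
apply: eq_bigr => l _; apply: eq_bigr => q _.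
by rewrite swap23E; congr (_ * _); rewrite mulrAC.
Qed.

Lemma swap23_mulr e x b (A : 'M[C]_e) (D : 'M[C]_x) (B : 'M[C]_b)
  (M : 'M[C]_(e * x * b)) :
  swap23 (M *m kron (kron A D) B) = swap23 M *m kron (kron A B) D.
Proof.
apply: matrix_idx3P => i j u i' j' u'.
rewrite swap23E !mulmx_kron3E; apply: eq_bigr => p _; rewrite exchange_big.
apply: eq_bigr => l _; apply: eq_bigr => q _.
by rewrite swap23E; congr (_ * _); rewrite mulrAC.
Qed.

Lemma adj_ptrB a b c (M : 'M[C]_(a * b * c)) : adj (ptrB M) = ptrB (adj M).
Proof.
apply: matrix_tidxP => i k i' k'; rewrite adjE !ptrBE rmorph_sum.
by apply: eq_bigr => j _; rewrite adjE.
Qed.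

Lemma adj_ptrA a b c (M : 'M[C]_(a * b * c)) : adj (ptrA M) = ptrA (adj M).
Proof.
apply: matrix_tidxP => j k j' k'; rewrite adjE !ptrAE rmorph_sum.
by apply: eq_bigr => i _; rewrite adjE.
Qed.

Lemma adj_extB a b c (X : 'M[C]_(a * c)) : adj (extB (b := b) X) = extB (adj X).
Proof.
apply: matrix_idx3P => i j k i' j' k'.
by rewrite adjE !extBE rmorphM rmorph_nat adjE eq_sym.
Qed.

Lemma adj_swap23 e x b (M : 'M[C]_(e * x * b)) : adj (swap23 M) = swap23 (adj M).
Proof. by apply: matrix_idx3P => i j u i' j' u'; rewrite adjE !swap23E adjE. Qed.

(** * Local unitary invariance of the conditional Renyi information *)

Lemma conjmx_mul3 n (G X Y Z : 'M[C]_n) : adj G *m G = 1%:M ->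
  (G *m X *m adj G) *m (G *m Y *m adj G) *m (G *m Z *m adj G) =
  G *m (X *m Y *m Z) *m adj G.
Proof.
move=> uG; rewrite -!mulmxA !(mulmxA (adj G) G) uG !mul1mx.
by rewrite !mulmxA.
Qed.

Lemma ptrAB_unitary_conj a b c (P : 'M[C]_a) (Q : 'M[C]_b)
  (w : 'M[C]_(a * b * c)) : unitary P -> unitary Q ->
  ptrAB (kron (kron P Q) 1%:M *m w *m adj (kron (kron P Q) 1%:M)) = ptrAB w.
Proof.
move=> hP hQ; rewrite -mulmxA ptrAB_mulC -mulmxA unitary_adj_mul ?mulmx1 //.
exact: unitary_kron (unitary_kron hP hQ) unitary1.
Qed.

Section UnitaryOnA.
Variables (a b c : nat) (P : 'M[C]_a).
Hypothesis hP : unitary P.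
Let G : 'M[C]_(a * b * c) := kron (kron P 1%:M) 1%:M.

Let adjG : adj G = kron (kron (adj P) 1%:M) 1%:M.
Proof. by rewrite !adj_kron !adjmx1. Qed.

Let unitaryG : unitary G.
Proof. exact: unitary_kron (unitary_kron hP unitary1) unitary1. Qed.

Lemma ptrB_unitary_conjA (w : 'M[C]_(a * b * c)) :
  ptrB (G *m w *m adj G) = kron P 1%:M *m ptrB w *m adj (kron P 1%:M).
Proof. by rewrite adjG ptrB_mulr ptrB_mull adj_kron adjmx1. Qed.

Lemma ptrA_unitary_conjA (Y : 'M[C]_(a * b * c)) : ptrA (G *m Y *m adj G) = ptrA Y.
Proof. by rewrite -mulmxA ptrA_mulC -mulmxA unitary_adj_mul // mulmx1. Qed.

Lemma extB_unitary_conjA (X : 'M[C]_(a * c)) :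
  extB (b := b) (kron P 1%:M *m X *m adj (kron P 1%:M)) = G *m extB X *m adj G.
Proof. by rewrite adjG adj_kron adjmx1 extB_mulr extB_mull. Qed.

Lemma renyi_cmi_unitary_conjA (alpha : R) (w : 'M[C]_(a * b * c)) :
  adj w = w -> renyi_cmi alpha (G *m w *m adj G) = renyi_cmi alpha w.
Proof.
move=> hw; have hwB : adj (ptrB w) = ptrB w by rewrite adj_ptrB hw.
have hK : unitary (kron P (1%:M : 'M[C]_c)) := unitary_kron hP unitary1.
rewrite /renyi_cmi ptrB_unitary_conjA (ptrAB_unitary_conj _ hP unitary1).
rewrite (mxpow_unitary_conj _ hwB hK) extB_unitary_conjA.
rewrite (mxpow_unitary_conj _ hw unitaryG) (conjmx_mul3 _ _ _ (unitary_adj_mul unitaryG)).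
by rewrite ptrA_unitary_conjA.
Qed.

End UnitaryOnA.

Section UnitaryOnB.
Variables (a b c : nat) (Q : 'M[C]_b).
Hypothesis hQ : unitary Q.
Let G : 'M[C]_(a * b * c) := kron (kron 1%:M Q) 1%:M.

Let adjG : adj G = kron (kron 1%:M (adj Q)) 1%:M.
Proof. by rewrite !adj_kron !adjmx1. Qed.

Let unitaryG : unitary G.
Proof. exact: unitary_kron (unitary_kron unitary1 hQ) unitary1. Qed.

Lemma ptrB_unitary_conjB (w : 'M[C]_(a * b * c)) : ptrB (G *m w *m adj G) = ptrB w.
Proof. by rewrite -mulmxA ptrB_mulC -mulmxA unitary_adj_mul // mulmx1. Qed.

Lemma ptrA_unitary_conjB (Y : 'M[C]_(a * b * c)) :
  ptrA (G *m Y *m adj G) = kron Q 1%:M *m ptrA Y *m adj (kron Q 1%:M).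
Proof. by rewrite adjG ptrA_mulr ptrA_mull adj_kron adjmx1. Qed.

Lemma extB_unitary_conjB (X : 'M[C]_(a * c)) (Y : 'M[C]_(a * b * c)) :
  extB X *m (G *m Y *m adj G) *m extB X = G *m (extB X *m Y *m extB X) *m adj G.
Proof.
rewrite !mulmxA extB_mulC -!mulmxA; congr (_ *m (_ *m _)).
by rewrite adjG extB_mulC.
Qed.

Lemma renyi_cmi_unitary_conjB (alpha : R) (w : 'M[C]_(a * b * c)) :
  adj w = w -> renyi_cmi alpha (G *m w *m adj G) = renyi_cmi alpha w.
Proof.
move=> hw; have hK : unitary (kron Q (1%:M : 'M[C]_c)) := unitary_kron hQ unitary1.
rewrite /renyi_cmi ptrB_unitary_conjB (ptrAB_unitary_conj _ unitary1 hQ).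
rewrite (mxpow_unitary_conj _ hw unitaryG) extB_unitary_conjB ptrA_unitary_conjB.
set T := kron 1%:M _; set S := extB _; set Y := ptrA _.
have TK : T *m kron Q 1%:M = kron Q 1%:M *m T.
  by rewrite /T !kron_mulmx !mulmx1 !mul1mx.
have TK' : adj (kron Q 1%:M) *m T = T *m adj (kron Q 1%:M).
  by rewrite /T adj_kron adjmx1 !kron_mulmx !mulmx1 !mul1mx.
have commT : T *m (kron Q 1%:M *m Y *m adj (kron Q 1%:M)) *m T =
             kron Q 1%:M *m (T *m Y *m T) *m adj (kron Q 1%:M).
  by rewrite !mulmxA TK -!mulmxA TK'.
have hT : adj T = T by rewrite /T adj_kron adjmx1 adj_mxpow.
have hS : adj S = S by rewrite /S adj_extB adj_mxpow.
have hY : adj Y = Y by rewrite /Y adj_ptrA adj_sandwich ?adj_mxpow.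
have hTYT := adj_sandwich hT hY.
by rewrite commT (mxpow_unitary_conj _ hTYT hK) (mxtrace_unitary_conj _ hK).
Qed.

End UnitaryOnB.

Lemma renyi_cmi_local_unitary a b c (alpha : R) (P : 'M[C]_a) (Q : 'M[C]_b)
  (w : 'M[C]_(a * b * c)) : unitary P -> unitary Q -> adj w = w ->
  renyi_cmi alpha (kron (kron P Q) (1%:M : 'M[C]_c) *m w *m
                   adj (kron (kron P Q) 1%:M)) = renyi_cmi alpha w.
Proof.
move=> hP hQ hw.
pose GA : 'M[C]_(a * b * c) := kron (kron P 1%:M) 1%:M.
pose GB : 'M[C]_(a * b * c) := kron (kron 1%:M Q) 1%:M.
have -> : kron (kron P Q) 1%:M = GA *m GB by rewrite !kron_mulmx !mulmx1 !mul1mx.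
have -> : GA *m GB *m w *m adj (GA *m GB) = GA *m (GB *m w *m adj GB) *m adj GA.
  by rewrite adjM !mulmxA.
rewrite (renyi_cmi_unitary_conjA hP alpha (adj_conjmx GB hw)).
by apply: renyi_cmi_unitary_conjB.
Qed.

(** * The post-measurement state *)

Definition branch_iso d k (S : 'I_k -> 'M[C]_d) : 'M[C]_(d * k * k, d) :=
  \sum_(x < k) \sum_(a' < d) \sum_(a0 < d) S x a' a0 *: delta_mx (idx3 a' x x) a0.

Lemma branch_isoE d k (S : 'I_k -> 'M[C]_d) a' x y a0 :
  branch_iso S (idx3 a' x y) a0 = S x a' a0 * (x == y)%:R.
Proof.
rewrite /branch_iso !pair_bigA summxE /=.
under eq_bigr => t _ do rewrite !mxE.
rewrite (big_pick1 (t0 := (x, a', a0))) /=.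
  by rewrite !eq_idx3 !eqxx /= ?andbT eq_sym.
case=> [[p q] r] /=; rewrite !eq_idx3.
by case/andP => /and3P[/eqP <- /eqP <- _] /eqP <-.
Qed.

Lemma branch_iso_conj d k (U : 'M[C]_d) (S : 'I_k -> 'M[C]_d) :
  branch_iso (fun x => U *m S x *m adj U) =
  kron (kron U 1%:M) (1%:M : 'M[C]_k) *m branch_iso S *m adj U.
Proof.
apply: matrix_idx3_rowP => a' x y a0.
rewrite branch_isoE [RHS]mxE.
under [RHS]eq_bigr => s _ do rewrite kronA11_mulmxE.
under [RHS]eq_bigr => s _ do under eq_bigr => p _ do rewrite branch_isoE.
rewrite !mxE mulr_suml; apply: eq_bigr => s _.
rewrite !mxE !mulr_suml; apply: eq_bigr => p _.
by ring.
Qed.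

(* [meas_iso L] unfolds to [branch_iso] of the square roots of the [L x]. *)
Lemma meas_iso_unitary_conj d k (L : 'I_k -> 'M[C]_d) (U : 'M[C]_d) :
  unitary U -> (forall x, adj (L x) = L x) ->
  meas_iso (fun x => U *m L x *m adj U) =
  kron (kron U 1%:M) (1%:M : 'M[C]_k) *m meas_iso L *m adj U.
Proof.
move=> hU hL; rewrite -(branch_iso_conj U (fun x => mxpow (L x) (2^-1))).
by congr branch_iso; apply/funext => x; rewrite mxpow_unitary_conj.
Qed.

Lemma post_meas_unitary_conj dA dB k (L : 'I_k -> 'M[C]_dA)
  (rho : 'M[C]_(dA * dB)) (U : 'M[C]_dA) (V : 'M[C]_dB) :
  unitary U -> (forall x, adj (L x) = L x) ->
  post_meas (fun x => U *m L x *m adj U) (kron U V *m rho *m adj (kron U V)) =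
  kron (kron (kron U 1%:M) V) (1%:M : 'M[C]_k) *m post_meas L rho *m
  adj (kron (kron (kron U 1%:M) V) 1%:M).
Proof.
move=> hU hL; rewrite /post_meas (meas_iso_unitary_conj hU hL).
set G := kron (kron U 1%:M) 1%:M; set W := kron (meas_iso L) 1%:M.
have WK : kron (G *m meas_iso L *m adj U) 1%:M *m kron U V = kron G V *m W.
  by rewrite !kron_mulmx -mulmxA unitary_adj_mul // !mulmx1 mul1mx.
rewrite conjmx_comp WK -conjmx_comp !adj_kron !adjmx1.
by rewrite swap23_mulr swap23_mull.
Qed.

Lemma adj_post_meas dA dB k (L : 'I_k -> 'M[C]_dA) (rho : 'M[C]_(dA * dB)) :
  adj rho = rho -> adj (post_meas L rho) = post_meas L rho.
Proof. by move=> hr; rewrite /post_meas adj_swap23 adj_conjmx. Qed.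

Lemma renyi_cmi_post_meas_unitary_conj (alpha : R) dA dB k
  (L : 'I_k -> 'M[C]_dA) (rho : 'M[C]_(dA * dB)) (U : 'M[C]_dA) (V : 'M[C]_dB) :
  unitary U -> unitary V -> adj rho = rho -> (forall x, adj (L x) = L x) ->
  renyi_cmi alpha (post_meas (fun x => U *m L x *m adj U)
                             (kron U V *m rho *m adj (kron U V))) =
  renyi_cmi alpha (post_meas L rho).
Proof.
move=> hU hV hr hL; rewrite (post_meas_unitary_conj _ _ hU hL).
exact: (renyi_cmi_local_unitary alpha (unitary_kron hU unitary1) hV
  (adj_post_meas L hr)).
Qed.

(** * The discord *)

Lemma povm_unitary_conj d k (L : 'I_k -> 'M[C]_d) (U : 'M[C]_d) :
  unitary U -> povm L -> povm (fun x => U *m L x *m adj U).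
Proof.
move=> hU [hL hsum]; split.
  move=> x; have [hLx posLx] := hL x; split; first exact: adj_conjmx.
  by move=> v; have := posLx (adj U *m v); rewrite !adjM adjK !mulmxA.
by rewrite -mulmx_suml -mulmx_sumr hsum mulmx1 unitary_mul_adj.
Qed.

Lemma kron_unitary_conjK dA dB (U : 'M[C]_dA) (V : 'M[C]_dB)
  (rho : 'M[C]_(dA * dB)) : unitary U -> unitary V ->
  kron (adj U) (adj V) *m (kron U V *m rho *m adj (kron U V)) *m
    adj (kron (adj U) (adj V)) = rho.
Proof.
move=> hU hV; rewrite conjmx_comp kron_mulmx !unitary_adj_mul // kron1.
by rewrite mul1mx adjmx1 mulmx1.
Qed.

Definition discord_values (alpha : R) dA dB (rho : 'M[C]_(dA * dB)) : set (\bar R) :=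
  [set r | exists (k : nat) (L : 'I_k -> 'M[C]_dA),
     povm L /\ r = (renyi_cmi alpha (post_meas L rho))%:E].

Lemma discord_values_unitary_conj (alpha : R) dA dB (rho : 'M[C]_(dA * dB))
  (U : 'M[C]_dA) (V : 'M[C]_dB) : adj rho = rho -> unitary U -> unitary V ->
  (discord_values alpha rho `<=`
   discord_values alpha (kron U V *m rho *m adj (kron U V)))%classic.
Proof.
move=> hr hU hV r [k [L [hL ->]]].
exists k, (fun x => U *m L x *m adj U); split; first exact: povm_unitary_conj.
have hLadj x : adj (L x) = L x := (hL.1 x).1.
exact: (f_equal (@EFin R)
  (esym (renyi_cmi_post_meas_unitary_conj alpha hU hV hr hLadj))).
Qed.

Lemma renyi_discord_unitary_conj (alpha : R) dA dB (rho : 'M[C]_(dA * dB))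
  (U : 'M[C]_dA) (V : 'M[C]_dB) : adj rho = rho -> unitary U -> unitary V ->
  renyi_discord alpha (kron U V *m rho *m adj (kron U V)) =
  renyi_discord alpha rho.
Proof.
move=> hr hU hV; apply: (f_equal (@ereal_inf R)).
apply/seteqP; split; last exact: discord_values_unitary_conj.
have := discord_values_unitary_conj (alpha := alpha) (adj_conjmx (kron U V) hr)
  (unitary_adj hU) (unitary_adj hV).
by rewrite kron_unitary_conjK.
Qed.

End RenyiDiscordInvariance.

Unset Implicit Arguments.
Theorem proposition9 (R : realType) (alpha : R)
  (halpha0 : 0 < alpha) (halpha1 : alpha != 1)
  (dA dB : nat) (rho : 'M[R[i]]_(dA * dB))
  (U : 'M[R[i]]_dA) (V : 'M[R[i]]_dB) :
  is_state rho -> unitary U -> unitary V ->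
  renyi_discord alpha (kron U V *m rho *m adj (kron U V)) =
  renyi_discord alpha rho.
Proof. by move=> [[hr _] _]; apply: renyi_discord_unitary_conj. Qed.
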